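(* Let $G$ be the graph on vertex set $\{a,b,p,q,x,z\}$ with edges $\{a,b\},\{a,x\},\{b,x\},\{a,p\},\{b,q\},\{p,z\},\{x,z\},\{q,z\}$, and let $I(G)\subseteq K[a,b,p,q,x,z]$ ($K$ a field) be its edge ideal. Then $I(G)^s$ has linear quotients for all $s\ge 2$.
   Context: The edge ideal is generated by the monomials $uv$ for the edges $\{u,v\}$ of $G$. A monomial ideal generated in a single degree has linear quotients if its minimal monomial generators can be ordered $u_1>\cdots>u_r$ so that each colon ideal $(u_1,\ldots,u_i):u_{i+1}$, $1\le i<r$, is generated by a subset of the variables. *)

(* Monomials in the 6 variables a,b,p,q,x,z of K[a,b,p,q,x,z]
   are represented by exponent vectors. Monomial ideals are handled through
   their sets of monomials (a monomial ideal is determined by the monomials it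
   contains, independently of the field K). *)
From mathcomp Require Import all_boot.
Set Implicit Arguments. Unset Strict Implicit. Unset Printing Implicit Defensive.

Definition monomial := {ffun 'I_6 -> nat}.

Definition mdiv (m1 m2 : monomial) : Prop := forall i, m1 i <= m2 i.
Definition mmul (m1 m2 : monomial) : monomial := [ffun i => m1 i + m2 i].
Definition mone : monomial := [ffun _ => 0].
Definition var (i : 'I_6) : monomial := [ffun j => nat_of_bool (j == i)].

Definition va : 'I_6 := @Ordinal 6 0 isT.
Definition vb : 'I_6 := @Ordinal 6 1 isT.
Definition vp : 'I_6 := @Ordinal 6 2 isT.
Definition vq : 'I_6 := @Ordinal 6 3 isT.
Definition vx : 'I_6 := @Ordinal 6 4 isT.
Definition vz : 'I_6 := @Ordinal 6 5 isT.

Definition edgesG : seq ('I_6 * 'I_6) :=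
  [:: (va, vb); (va, vx); (vb, vx); (va, vp); (vb, vq); (vp, vz); (vx, vz); (vq, vz)].

Definition edge_mono (e : 'I_6 * 'I_6) : monomial := mmul (var e.1) (var e.2).

Definition in_edge_ideal_pow (s : nat) (m : monomial) : Prop :=
  exists es : seq ('I_6 * 'I_6),
    [/\ size es = s, all (fun e => e \in edgesG) es &
        mdiv (foldr mmul mone (map edge_mono es)) m].

Definition min_gen (P : monomial -> Prop) (m : monomial) : Prop :=
  P m /\ forall m', P m' -> mdiv m' m -> m' = m.

(* (gens) : u is generated by a subset S of the variables:
   a monomial m lies in (gens) : u  (i.e. m*u lies in the ideal (gens))
   iff m is divisible by some variable in S. *)
Definition colon_generated_by_vars (gens : seq monomial) (u : monomial) : Prop :=
  exists S : {set 'I_6}, forall m : monomial,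
    (exists2 g, g \in gens & mdiv g (mmul m u)) <-> (exists2 k, k \in S & 0 < m k).

(* linear quotients: an ordering u_1,...,u_r of the minimal monomial
   generators such that each (u_1,...,u_i) : u_{i+1} is generated by variables
   (0-indexed below: (us_0..us_{i-1}) : us_i for 0 < i < r). *)
Definition has_linear_quotients (P : monomial -> Prop) : Prop :=
  exists us : seq monomial,
    [/\ uniq us, (forall m, m \in us <-> min_gen P m) &
        forall i, 0 < i < size us ->
          colon_generated_by_vars (take i us) (nth mone us i)].

From mathcomp Require Import all_boot all_order zify.
Set Implicit Arguments. Unset Strict Implicit. Unset Printing Implicit Defensive.
Import Order.TTheory.

(* The minimal generators of I(G)^s are the products of s edges.  Among the
   monomials of degree 2s they are exactly the exponent vectors satisfying the
   independent-set inequalities [edge_balanced]: such a vector always has an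
   edge whose removal preserves the inequalities, so edges can be split off one
   at a time.
   List the generators decreasingly for a lexicographic order whose variable
   priority depends on the support.  If g precedes u, there are variables x_l,
   x_k with u_l < g_l and x_k | u such that u x_l / x_k is again a generator
   preceding u; so the colon ideal of the earlier generators by u is generated
   by the variables x_l for which x_l u lies in the earlier ideal. *)

Lemma ord6_cases (P : 'I_6 -> Prop) :
  P va -> P vb -> P vp -> P vq -> P vx -> P vz -> forall i, P i.
Proof.
by move=> Pa Pb Pp Pq Px Pz [[|[|[|[|[|[|n]]]]]] lt_i] //;
  rewrite (bool_irrelevance lt_i isT).
Qed.

Lemma monomialP (m1 m2 : monomial) :
  m1 va = m2 va -> m1 vb = m2 vb -> m1 vp = m2 vp -> m1 vq = m2 vq ->
  m1 vx = m2 vx -> m1 vz = m2 vz -> m1 = m2.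
Proof. by move=> *; apply/ffunP; apply: ord6_cases. Qed.

Lemma mdivE (m1 m2 : monomial) : mdiv m1 m2 <->
  [/\ m1 va <= m2 va, m1 vb <= m2 vb, m1 vp <= m2 vp, m1 vq <= m2 vq &
      m1 vx <= m2 vx /\ m1 vz <= m2 vz].
Proof.
split=> [le_m | [? ? ? ? [? ?]]]; first by rewrite !le_m.
exact: ord6_cases.
Qed.

Lemma mmulE (m1 m2 : monomial) i : mmul m1 m2 i = m1 i + m2 i.
Proof. by rewrite ffunE. Qed.

Definition mdeg (m : monomial) : nat := m va + m vb + m vp + m vq + m vx + m vz.

Lemma mdegM (m1 m2 : monomial) : mdeg (mmul m1 m2) = mdeg m1 + mdeg m2.
Proof. rewrite /mdeg !mmulE; lia. Qed.

Lemma mdeg_var i : mdeg (var i) = 1.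
Proof. by move: i; apply: ord6_cases; rewrite /mdeg !ffunE. Qed.

Lemma mdeg_edge_mono e : mdeg (edge_mono e) = 2.
Proof. by rewrite mdegM !mdeg_var. Qed.

Lemma leqif_mdeg (m1 m2 : monomial) : mdiv m1 m2 -> mdeg m1 <= mdeg m2 ?= iff (m1 == m2).
Proof.
move=> /mdivE[? ? ? ? [? ?]]; split; first by rewrite /mdeg; lia.
apply/eqP/eqP => [eq_deg | -> //]; apply: monomialP; move: eq_deg; rewrite /mdeg; lia.
Qed.

(* For each independent set S of G the exponents on S sum to at most those on
   the neighbourhood N(S); only the irredundant instances S = {a}, {b}, {p},
   {q}, {x}, {z}, {a,q}, {a,z}, {b,p}, {b,z}, {p,q,x} are listed. *)
Definition edge_balanced (m : monomial) : bool :=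
  [&& m va <= m vb + m vp + m vx, m vb <= m va + m vq + m vx,
      m vp <= m va + m vz, m vq <= m vb + m vz, m vx <= m va + m vb + m vz,
      m vz <= m vp + m vq + m vx, m va + m vq <= m vb + m vp + m vx + m vz,
      m va + m vz <= m vb + m vp + m vq + m vx,
      m vb + m vp <= m va + m vq + m vx + m vz,
      m vb + m vz <= m va + m vp + m vq + m vx &
      m vp + m vq + m vx <= m va + m vb + m vz].

Lemma edge_balanced_edge e : e \in edgesG -> edge_balanced (edge_mono e).
Proof.
by rewrite !inE => /orP[|/orP[|/orP[|/orP[|/orP[|/orP[|/orP[|]]]]]]] /eqP->;
  rewrite /edge_balanced !mmulE !ffunE.
Qed.

Lemma edge_balancedM (m1 m2 : monomial) :
  edge_balanced m1 -> edge_balanced m2 -> edge_balanced (mmul m1 m2).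
Proof. rewrite /edge_balanced !mmulE; lia. Qed.

Definition edge_prod (es : seq ('I_6 * 'I_6)) : monomial :=
  foldr mmul mone (map edge_mono es).

Definition is_edge_prod (s : nat) (m : monomial) : Prop :=
  exists es, [/\ size es = s, all (mem edgesG) es & edge_prod es = m].

Lemma edge_prod_balanced es : all (mem edgesG) es ->
  edge_balanced (edge_prod es) /\ mdeg (edge_prod es) = 2 * size es.
Proof.
elim: es => [|e es IHes] /=; first by rewrite /edge_balanced /mdeg !ffunE.
case/andP=> e_in /IHes[bal deg]; rewrite mdegM mdeg_edge_mono deg mulnS.
by split=> //; apply: edge_balancedM => //; exact: edge_balanced_edge.
Qed.

Ltac split_off_edge m i j :=
  exists (i, j), [ffun k => m k - edge_mono (i, j) k];
  split; [by rewrite !inE | apply: monomialP | rewrite /edge_balanced];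
  rewrite ?mmulE !ffunE /=; lia.

Lemma edge_balanced_factor s m : edge_balanced m -> mdeg m = 2 * s.+1 ->
  exists e m', [/\ e \in edgesG, m = mmul (edge_mono e) m' & edge_balanced m'].
Proof.
rewrite /edge_balanced /mdeg => bal deg_m.
have [slack | tight] := ltnP (m vp + m vq + m vx) (m va + m vb + m vz).
  by split_off_edge m va vb.
(* Now p + q + x = a + b + z, so the edge must join {a, b, z} to {p, q, x}. *)
have [a0 | a_pos] := posnP (m va); last first.
  by have [p0 | p_pos] := posnP (m vp); [split_off_edge m va vx | split_off_edge m va vp].
have [p0 | p_pos] := posnP (m vp); last by split_off_edge m vp vz.
have [b0 | b_pos] := posnP (m vb).
  by have [q0 | q_pos] := posnP (m vq); [split_off_edge m vx vz | split_off_edge m vq vz].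
by have [q0 | q_pos] := posnP (m vq); [split_off_edge m vb vx | split_off_edge m vb vq].
Qed.

Lemma edge_balanced_is_edge_prod s m :
  edge_balanced m -> mdeg m = 2 * s -> is_edge_prod s m.
Proof.
elim: s m => [|s IHs] m bal deg_m.
  exists [::]; split=> //; apply: monomialP; rewrite ffunE; move: deg_m; rewrite /mdeg; lia.
have [e [m' [e_in def_m bal']]] := edge_balanced_factor bal deg_m.
have deg_m' : mdeg m' = 2 * s by move: deg_m; rewrite def_m mdegM mdeg_edge_mono; lia.
have [es [size_es es_in prod_es]] := IHs m' bal' deg_m'.
by exists (e :: es); rewrite /= size_es e_in def_m -prod_es.
Qed.

Lemma is_edge_prodE s m : is_edge_prod s m <-> edge_balanced m /\ mdeg m = 2 * s.
Proof.
split=> [[es [<- es_in <-]] | [bal deg_m]]; first exact: edge_prod_balanced.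
exact: edge_balanced_is_edge_prod.
Qed.

Lemma in_edge_ideal_pow_mdeg s m : in_edge_ideal_pow s m -> 2 * s <= mdeg m.
Proof.
case=> es [<- es_in dvd]; have [_ <-] := edge_prod_balanced es_in.
exact: (leqif_mdeg dvd).1.
Qed.

Lemma min_gen_edge_ideal_pow s m :
  min_gen (in_edge_ideal_pow s) m <-> is_edge_prod s m.
Proof.
split=> [[[es [size_es es_in dvd]] minimal] | [es [size_es es_in prod_m]]].
  exists es; split=> //; apply: minimal dvd.
  by exists es; split=> // i; exact: leqnn.
split=> [|m' in_m' dvd]; first by exists es; split=> // i; rewrite -prod_m.
have [_] := edge_prod_balanced es_in; rewrite prod_m size_es => deg_m.
by apply/eqP; rewrite -(geq_leqif (leqif_mdeg dvd)) deg_m in_edge_ideal_pow_mdeg.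
Qed.

(* The key of w in the variable order attached to u; by mltE, comparisons with u
   only need u's order. *)
Definition mkey_at (u w : monomial) : seqlexi nat :=
  if 0 < u va then [:: w va; w vb; w vp; w vx; w vq; w vz]
  else if 0 < u vb then [:: w va; w vb; w vq; w vx; w vp; w vz]
  else [:: w va; w vb; w vx; minn (w vp) (w vq); w vp; w vq; w vz].

Definition mkey (u : monomial) : seqlexi nat := mkey_at u u.

Definition mlt (u w : monomial) : bool := (mkey u < mkey w)%O.

Lemma mkey_inj : injective mkey.
Proof.
move=> u w; rewrite /mkey /mkey_at.
by repeat case: ifPn => ?; case=> *; apply: monomialP; lia.
Qed.

Lemma mltE u w : mlt u w = (mkey_at u u < mkey_at u w)%O.
Proof.
rewrite /mlt /mkey /mkey_at.
by repeat case: ifPn => ?;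
  apply/idP/idP; rewrite !ltxi_cons ?ltxis0 ?ltxi0s !leEnat /=; lia.
Qed.

(* u * x_l / x_k; meaningful only when 0 < u k, because of truncated subtraction. *)
Definition exchange_var (u : monomial) (l k : 'I_6) : monomial :=
  [ffun i => u i + (i == l) - (i == k)].

Definition exchange_step (s : nat) (u g : monomial) : Prop :=
  exists l k, [/\ u l < g l, 0 < u k, edge_balanced (exchange_var u l k),
                  mdeg (exchange_var u l k) = 2 * s &
                  (mkey_at u u < mkey_at u (exchange_var u l k))%O].

(* The witnesses (l, k) in the case analyses below were found by computer search. *)
Ltac exchange_with l k :=
  exists l, k;
  rewrite /edge_balanced /mdeg /exchange_var !ffunE /= ?addn0 ?subn0 ?eqhead_ltxiE;
  rewrite !ltxi_cons ?ltxis0 !leEnat /=; split; lia.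

Section Exchange.

Variables (s : nat) (u g : monomial).
Hypotheses (s_ge2 : 2 <= s) (bal_u : edge_balanced u) (bal_g : edge_balanced g).
Hypotheses (deg_u : mdeg u = 2 * s) (deg_g : mdeg g = 2 * s) (lt_ug : mlt u g).

Lemma exchange_step_a_pos : 0 < u va -> exchange_step s u g.
Proof.
move=> u_a; rewrite /exchange_step /mkey_at u_a /=.
move: s_ge2 bal_u deg_u bal_g deg_g lt_ug.
rewrite /edge_balanced /mdeg mltE /mkey_at u_a /= !ltxi_cons ?ltxis0 !leEnat /= => *.
have [?|?] := ltnP (u vb) (g vb).
- have [?|?] := leqP (u vp + 2) (u va + u vz).
  + have [?|?] := ltnP 0 (u vz).
    * have [?|?] := leqP (u vb + u vp + 1) (u va + u vq + u vx + u vz).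
        by exchange_with vb vz.
      have [?|?] := ltnP (u vq) (g vq).
        by exchange_with vq vz.
      have [?|?] := ltnP (u va) (g va).
        by exchange_with va vz.
      by have [?|?] := ltnP (u vx) (g vx); [exchange_with vx vz | exchange_with vb vp].
    * by have [?|?] := ltnP 0 (u vp); [exchange_with vb vp | exchange_with vb vx].
  + have [?|?] := leqP (u vb + 1) (u va + u vq + u vx).
    * by have [?|?] := ltnP 0 (u vp); [exchange_with vb vp | exchange_with vb vx].
    * have [?|?] := ltnP (u va) (g va).
        by exchange_with va vz.
      by have [?|?] := ltnP (u vq) (g vq); [exchange_with vq vz | exchange_with vx vz].
- have [?|?] := ltnP (u vx) (g vx).
  + have [?|?] := ltnP 0 (u vq).
      by exchange_with vx vq.
    have [?|?] := ltnP 0 (u vz); last by exchange_with va vb.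
    by have [?|?] := ltnP (u va) (g va); [exchange_with va vz | exchange_with vx vz].
  + have [?|?] := ltnP (u vp) (g vp).
    * have [?|?] := leqP (u vb + u vp + 1) (u va + u vq + u vx + u vz).
      -- by have [?|?] := ltnP 0 (u vq); [exchange_with vp vq | exchange_with vp vx].
      -- have [?|?] := ltnP 0 (u vq).
           by exchange_with va vq.
         by have [?|?] := ltnP 0 (u vx); [exchange_with va vb | exchange_with va vz].
    * have [?|?] := ltnP 0 (u vz).
      -- have [?|?] := ltnP (u va) (g va); last by exchange_with vq vz.
         by have [?|?] := ltnP (g vq) (u vq); [exchange_with va vq | exchange_with va vz].
      -- by have [?|?] := ltnP 0 (u vq); [exchange_with va vq | exchange_with va vb].
Qed.

Lemma exchange_step_b_pos : u va = 0 -> 0 < u vb -> exchange_step s u g.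
Proof.
move=> u_a u_b; rewrite /exchange_step /mkey_at u_a u_b /=.
move: s_ge2 bal_u deg_u bal_g deg_g lt_ug.
rewrite /edge_balanced /mdeg mltE /mkey_at u_a u_b /= !ltxi_cons ?ltxis0 !leEnat /= => *.
have [?|?] := ltnP 0 (u vq).
- have [?|?] := ltnP (u va) (g va).
    by exchange_with va vq.
  have [?|?] := ltnP (u vb) (g vb).
  + have [?|?] := leqP (u vb + 1) (u va + u vq + u vx).
      by exchange_with vb vz.
    by have [?|?] := ltnP (u vq) (g vq); [exchange_with vq vp | exchange_with vx vp].
  + have [?|?] := ltnP (u vx) (g vx).
      by exchange_with vx vp.
    by have [?|?] := ltnP 0 (u vp); [exchange_with vq vp | exchange_with vq vx].
- have [?|?] := ltnP (u va) (g va).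
    by exchange_with va vb.
  have [?|?] := ltnP (u vq) (g vq).
    by exchange_with vq vx.
  by have [?|?] := ltnP (u vx) (g vx); [exchange_with vx vp | exchange_with vb vz].
Qed.

Lemma exchange_step_ab0 : u va = 0 -> u vb = 0 -> exchange_step s u g.
Proof.
move=> u_a u_b; rewrite /exchange_step /mkey_at u_a u_b /=.
move: s_ge2 bal_u deg_u bal_g deg_g lt_ug.
rewrite /edge_balanced /mdeg mltE /mkey_at u_a u_b /= !ltxi_cons ?ltxis0 !leEnat /= => *.
have [?|?] := ltnP (u va) (g va).
- have [?|?] := leqP (u va + 1) (u vb + u vp + u vx).
    by exchange_with va vz.
  have [?|?] := ltnP (u vb) (g vb).
    by exchange_with vb vz.
  by have [?|?] := ltnP (u vp) (g vp); [exchange_with vp vq | exchange_with vx vq].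
- have [?|?] := ltnP (u vb) (g vb).
  + have [?|?] := leqP (u vb + 1) (u va + u vq + u vx).
      by exchange_with vb vz.
    by have [?|?] := ltnP (u vq) (g vq); [exchange_with vq vp | exchange_with vx vp].
  + have [?|?] := ltnP (u vp) (g vp).
    * by have [?|?] := ltnP (u vx) (g vx); [exchange_with vx vq | exchange_with vp vq].
    * have [?|?] := ltnP 0 (u vp); last by exchange_with vx vq.
      by have [?|?] := ltnP (u vx) (g vx); [exchange_with vx vp | exchange_with vq vp].
Qed.

Lemma mlt_exchange_step : exchange_step s u g.
Proof.
have [u_a | u_a] := posnP (u va); last exact: exchange_step_a_pos.
have [u_b | u_b] := posnP (u vb); last exact: exchange_step_b_pos.
exact: exchange_step_ab0.
Qed.

End Exchange.

Section SortedTake.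

Variables (T : eqType) (r : rel T).
Hypotheses (r_irr : irreflexive r) (r_trans : transitive r).

Lemma mem_take_sorted x0 s i y : sorted r s -> i < size s ->
  (y \in take i s) = (y \in s) && r y (nth x0 s i).
Proof.
move=> s_sorted lt_i.
have [y_in | y_notin] := boolP (y \in s); last first.
  by apply/negbTE; apply: contra y_notin; apply: mem_take.
have := index_uniq x0 lt_i (sorted_uniq r_trans r_irr s_sorted).
move: (mem_nth x0 lt_i); move: (nth x0 s i) => z z_in index_z.
rewrite in_take //= -index_z.
apply/idP/idP => [lt_yz | r_yz].
  exact: (sorted_ltn_index r_trans s_sorted y z y_in z_in lt_yz).
case: ltngtP => // [lt_zy | eq_yz].
  have := sorted_ltn_index r_trans s_sorted z y z_in y_in lt_zy.
  by move/(r_trans r_yz); rewrite r_irr.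
by move: r_yz; rewrite -(nth_index x0 y_in) eq_yz nth_index // r_irr.
Qed.

End SortedTake.

Lemma colon_generated_by_vars_exchange (gens : seq monomial) (u : monomial) :
  (forall g, g \in gens ->
     exists2 l, u l < g l & exists2 h, h \in gens & mdiv h (mmul (var l) u)) ->
  colon_generated_by_vars gens u.
Proof.
move=> exch.
exists [set l | has (fun h : monomial => [forall i, h i <= mmul (var l) u i]) gens] => m.
split=> [[g g_in g_dvd] | [l]].
  have [l lt_ul [h h_in h_dvd]] := exch g g_in.
  exists l; first by rewrite inE; apply/hasP; exists h => //; apply/forallP.
  by have := leq_trans lt_ul (g_dvd l); rewrite mmulE -{1}(add0n (u l)) ltn_add2r.
rewrite inE => /hasP[h h_in /forallP h_dvd] m_l; exists h => // i.
by apply: leq_trans (h_dvd i) _; rewrite !mmulE ffunE leq_add2r; case: eqP => [-> | _].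
Qed.

Definition min_gens (s : nat) : seq monomial :=
  sort (fun u w => mkey w <= mkey u)%O
    (undup [seq edge_prod t | t : s.-tuple ('I_6 * 'I_6)
                               in [pred t | all (mem edgesG) (val t)]]).

Lemma mem_min_gens s m : m \in min_gens s <-> is_edge_prod s m.
Proof.
rewrite mem_sort mem_undup.
split=> [/imageP[t t_edges ->] | [es [size_es es_edges <-]]].
  by exists t; rewrite size_tuple.
by apply/imageP; exists (Tuple (introT eqP size_es)).
Qed.

Lemma min_gens_uniq s : uniq (min_gens s).
Proof. by rewrite sort_uniq undup_uniq. Qed.

Lemma min_gens_sorted s : sorted (fun u w => mlt w u) (min_gens s).
Proof.
have ge_total : total (fun u w : monomial => mkey w <= mkey u)%O.
  by move=> u w; exact: le_total.
have ge_trans : transitive (fun u w : monomial => mkey w <= mkey u)%O.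
  by move=> v u w le_vu le_wv; exact: le_trans le_wv le_vu.
apply: pairwise_sorted.
apply: (@sub_pairwise _ [rel u w | (mkey w <= mkey u)%O && (u != w)]).
  move=> u w /andP[le_wu neq_uw]; rewrite /mlt lt_neqAle le_wu andbT.
  by apply: contra neq_uw => /eqP/mkey_inj->.
by rewrite pairwise_relI -sorted_pairwise // sort_sorted //= -uniq_pairwise min_gens_uniq.
Qed.

Theorem proposition5p2 (s : nat) : 2 <= s -> has_linear_quotients (in_edge_ideal_pow s).
Proof.
move=> s_ge2; exists (min_gens s); split.
- exact: min_gens_uniq.
- by move=> m; rewrite min_gen_edge_ideal_pow mem_min_gens.
move=> i /andP[_ lt_i]; set u := nth mone (min_gens s) i.
have mem_take_u g : (g \in take i (min_gens s)) = (g \in min_gens s) && mlt u g.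
  apply: (@mem_take_sorted _ (fun u w => mlt w u)) => //; last exact: min_gens_sorted.
  - by move=> w; exact: ltxx.
  - by move=> v w w' lt_vw lt_w'v; exact: lt_trans lt_w'v lt_vw.
have [bal_u deg_u] : edge_balanced u /\ mdeg u = 2 * s.
  by apply/is_edge_prodE/mem_min_gens; exact: mem_nth.
apply: colon_generated_by_vars_exchange => g.
rewrite mem_take_u => /andP[/mem_min_gens/is_edge_prodE[bal_g deg_g] lt_ug].
have [l [k [lt_l _ bal' deg' lt']]] :=
  mlt_exchange_step s_ge2 bal_u bal_g deg_u deg_g lt_ug.
exists l => //; exists (exchange_var u l k).
  by rewrite mem_take_u mltE lt' andbT; apply/mem_min_gens/is_edge_prodE.
by move=> j; rewrite !ffunE addnC; exact: leq_subr.
Qed.
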